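(* Assume $\theta_{12}=\theta_{34}=1$. Let $U\in M_{n\times k}(\tilde{\mathcal A})$ satisfy $U^*U=1_k$, put $Q=1-UU^*$, and consider the connection $\nabla_j=\partial_j+A_j$, $A_j=U^*\partial_jU$ ($j=1,\dots,4$), with curvature $F_{mn}=\partial_mA_n-\partial_nA_m+[A_m,A_n]$. Then the anti-self-duality equations $$F_{12}=-F_{34},\qquad F_{13}=F_{24},\qquad F_{14}=-F_{23}$$ are equivalent to the single equation $$U^*\big[-3p_0^*Qp_0+p_1^*Qp_1+p_2^*Qp_2+p_3^*Qp_3\big]U=0,$$ where $p_0=\tfrac12\sigma_1\hat x_1-\tfrac12\sigma_2\hat x_2-\tfrac12\sigma_3\hat x_3+\tfrac i2\hat x_4$, $p_1=\tfrac1{\sqrt2}\sigma_1\hat x_1-\tfrac{i}{\sqrt2}\hat x_4$, $p_2=\tfrac1{\sqrt6}\sigma_1\hat x_1+\sqrt{\tfrac23}\,\sigma_2\hat x_2+\tfrac{i}{\sqrt6}\hat x_4$, $p_3=\tfrac1{2\sqrt3}\sigma_1\hat x_1-\tfrac1{2\sqrt3}\sigma_2\hat x_2+\tfrac{\sqrt3}{2}\sigma_3\hat x_3+\tfrac{i}{2\sqrt3}\hat x_4$, $\sigma_1,\sigma_2,\sigma_3$ are the Pauli matrices, and in this equation $U,U^*,Q$ stand for $U\otimes\mathrm{Id}_2$, $U^*\otimes\mathrm{Id}_2$, $Q\otimes\mathrm{Id}_2$ (the $\hat x_i$ acting diagonally on all matrix indices).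
   Context: $\hat x_1,\dots,\hat x_4$ are the canonical self-adjoint operators on $L^2(\mathbb R^2)$ with $[\hat x_1,\hat x_2]=i\theta_{12}$, $[\hat x_3,\hat x_4]=i\theta_{34}$ and all other commutators zero. $\mathcal A$ is one of the operator algebras $\mathcal S$, $\Gamma^m_\rho$, $\mathcal K^\infty$ (Weyl quantizations of the Schwartz space, of a symbol class with $m<0$, and of smooth functions with all derivatives vanishing at infinity), $\tilde{\mathcal A}$ its unitization. Derivations act entrywise on matrices by $\partial_1 f=\frac{i}{\theta_{12}}[\hat x_2,f]$, $\partial_2 f=-\frac{i}{\theta_{12}}[\hat x_1,f]$, $\partial_3f=\frac{i}{\theta_{34}}[\hat x_4,f]$, $\partial_4f=-\frac{i}{\theta_{34}}[\hat x_3,f]$. Pauli matrices: $\sigma_1=\begin{pmatrix}0&1\\1&0\end{pmatrix}$, $\sigma_2=\begin{pmatrix}0&-i\\i&0\end{pmatrix}$, $\sigma_3=\begin{pmatrix}1&0\\0&-1\end{pmatrix}$. *)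

From HB Require Import structures.
From mathcomp Require Import all_boot all_order all_algebra all_field.
Set Implicit Arguments. Unset Strict Implicit. Unset Printing Implicit Defensive.
Import Order.TTheory GRing.Theory Num.Theory.
Local Open Scope ring_scope.

Definition is_star (B : algType algC) (star : B -> B) : Prop :=
  [/\ forall a b : B, star (a + b) = star a + star b,
      forall a b : B, star (a * b) = star b * star a,
      forall (c : algC) (a : B), star (c *: a) = c^* *: star a
    & forall a : B, star (star a) = a].

Definition sc (B : algType algC) (c : algC) : B := c%:A.

Definition mxstar (R : pzRingType) (s : R -> R) m n (M : 'M[R]_(m, n)) : 'M[R]_(n, m) :=
  \matrix_(i, j) s (M j i).

Definition CCR (B : algType algC) (star : B -> B) (x1 x2 x3 x4 : B) : Prop :=
  [/\ star x1 = x1, star x2 = x2, star x3 = x3 & star x4 = x4] /\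
  [/\ x1 * x2 - x2 * x1 = sc B 'i, x3 * x4 - x4 * x3 = sc B 'i,
      x1 * x3 = x3 * x1, x1 * x4 = x4 * x1 & x2 * x3 = x3 * x2] /\
  x2 * x4 = x4 * x2.

Section Ops.
Variables (B : algType algC) (star : B -> B) (x1 x2 x3 x4 : B).

Definition comm (a b : B) : B := a * b - b * a.

Definition deriv (j : nat) (f : B) : B :=
  match j with
  | 1 => sc B 'i * comm x2 f
  | 2 => - (sc B 'i * comm x1 f)
  | 3 => sc B 'i * comm x4 f
  | 4 => - (sc B 'i * comm x3 f)
  | _ => 0
  end.

Definition dmx (j : nat) m n (M : 'M[B]_(m, n)) : 'M[B]_(m, n) := map_mx (deriv j) M.

Variables (n k : nat) (U : 'M[B]_(n, k)).

Definition Apot (j : nat) : 'M[B]_k := mxstar star U *m dmx j U.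

Definition Fcurv (a b : nat) : 'M[B]_k :=
  dmx a (Apot b) - dmx b (Apot a) + (Apot a *m Apot b - Apot b *m Apot a).

Definition star2 (M : 'M[B]_2) : 'M[B]_2 := mxstar star M.

Definition sig1 : 'M[B]_2 := \matrix_(i, j) if i == j then 0 else 1.
Definition sig2 : 'M[B]_2 :=
  \matrix_(i, j) if i == j then 0 else if val i == 0%N then sc B (- 'i) else sc B 'i.
Definition sig3 : 'M[B]_2 :=
  \matrix_(i, j) if i == j then (if val i == 0%N then 1 else -1) else 0.

(* sigma_a xhat_a ; scalar xhat_4 means xhat_4 Id_2 *)
Definition sx (s : 'M[B]_2) (x : B) : 'M[B]_2 := s *m x%:M.
Definition cs (c : algC) (M : 'M[B]_2) : 'M[B]_2 := sc B c *: M.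

Definition p0 : 'M[B]_2 :=
  cs (1/2) (sx sig1 x1) - cs (1/2) (sx sig2 x2) - cs (1/2) (sx sig3 x3)
  + cs ('i / 2) x4%:M.
Definition p1 : 'M[B]_2 :=
  cs (1 / sqrtC 2) (sx sig1 x1) - cs ('i / sqrtC 2) x4%:M.
Definition p2 : 'M[B]_2 :=
  cs (1 / sqrtC 6) (sx sig1 x1) + cs (sqrtC (2/3)) (sx sig2 x2)
  + cs ('i / sqrtC 6) x4%:M.
Definition p3 : 'M[B]_2 :=
  cs (1 / (2 * sqrtC 3)) (sx sig1 x1) - cs (1 / (2 * sqrtC 3)) (sx sig2 x2)
  + cs (sqrtC 3 / 2) (sx sig3 x3) + cs ('i / (2 * sqrtC 3)) x4%:M.

(* U (x) Id_2 etc., viewed as matrices with entries in M_2(B) *)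
Definition tens m l (M : 'M[B]_(m, l)) : 'M['M[B]_2]_(m, l) := map_mx (fun b => b%:M) M.
Definition U2 : 'M['M[B]_2]_(n, k) := tens U.
Definition U2s : 'M['M[B]_2]_(k, n) := tens (mxstar star U).
Definition Q2 : 'M['M[B]_2]_n := 1%:M - U2 *m U2s.

(* p^* Q p, with p acting diagonally on the n matrix indices *)
Definition pQp (p : 'M[B]_2) : 'M['M[B]_2]_n := (star2 p)%:M *m Q2 *m p%:M.

Definition bigExpr : 'M['M[B]_2]_k :=
  U2s *m (- (pQp p0 *+ 3) + pQp p1 + pQp p2 + pQp p3) *m U2.

End Ops.

From Pilot Require Import Defs.
From HB Require Import structures.
From mathcomp Require Import all_boot all_order all_algebra all_field.
From mathcomp Require Import ring.
Import Order.TTheory GRing.Theory Num.Theory.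
Set Implicit Arguments. Unset Strict Implicit. Unset Printing Implicit Defensive.
Local Open Scope ring_scope.
Local Open Scope sesquilinear_scope.

(* Since U^*U = 1, U^* d_j U = - (d_j U)^* U and the curvature becomes
   F_ab = (d_a U)^* Q (d_b U) - (d_b U)^* Q (d_a U).  Each p_i is a sum of
   c_a (x) y_a with c_a a numerical 2 x 2 matrix and y_a a coordinate; as
   U^* Q = 0 = Q U, U^* p^* Q p U = [U^*, p^*] Q [p, U], and [y_a, -] is a
   multiple of d_a.  The expression is thus sum_ab K_ab (x) (d_a U)^* Q (d_b U)
   for numerical K_ab, which turn out antisymmetric: it equals
   i s3 (x) (F12 + F34) + i s2 (x) (F13 - F24) + i s1 (x) (F14 + F23),
   and the Pauli matrices are linearly independent. *)

Section StarAlgebra.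
Variables (B : algType algC) (star : B -> B).
Hypothesis Hstar : is_star star.

Lemma starD a b : star (a + b) = star a + star b. Proof. by case: Hstar. Qed.
Lemma starM a b : star (a * b) = star b * star a. Proof. by case: Hstar. Qed.
Lemma starZ c a : star (c *: a) = c^* *: star a. Proof. by case: Hstar. Qed.

Lemma star0 : star 0 = 0.
Proof. by rewrite -(scale0r 0) starZ rmorph0 !scale0r. Qed.

Lemma starN a : star (- a) = - star a.
Proof. by rewrite -scaleN1r starZ rmorphN1 scaleN1r. Qed.

Lemma starB a b : star (a - b) = star a - star b.
Proof. by rewrite starD starN. Qed.

Lemma star_sum (I : Type) (r : seq I) (P : pred I) (F : I -> B) :
  star (\sum_(i <- r | P i) F i) = \sum_(i <- r | P i) star (F i).
Proof. exact: (big_morph _ starD star0). Qed.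

End StarAlgebra.

Section Commutator.
Variable B : algType algC.
Implicit Types (x y a b f : B).

Lemma commD x a b : comm x (a + b) = comm x a + comm x b.
Proof. by rewrite /comm mulrDr mulrDl opprD addrACA. Qed.

Lemma comm0 x : comm x 0 = 0.
Proof. by rewrite /comm mulr0 mul0r subrr. Qed.

Lemma commN x a : comm x (- a) = - comm x a.
Proof. by rewrite /comm mulrN mulNr opprB opprK addrC. Qed.

Lemma commZ x c a : comm x (c *: a) = c *: comm x a.
Proof. by rewrite /comm scalerBr -scalerAl -scalerAr. Qed.

Lemma commM x a b : comm x (a * b) = comm x a * b + a * comm x b.
Proof. by rewrite /comm mulrBl mulrBr !mulrA subrKA. Qed.

Lemma comm_alg x c : comm x c%:A = 0.
Proof. by rewrite /comm mulr_algl mulr_algr subrr. Qed.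

Lemma comm_nat x m : comm x m%:R = 0.
Proof. by rewrite -(rmorph_nat (in_alg B)) comm_alg. Qed.

Lemma star_comm (star : B -> B) x a : is_star star -> star x = x ->
  star (comm x a) = - comm x (star a).
Proof. by move=> Hstar hx; rewrite /comm (starB Hstar) !(starM Hstar) hx opprB. Qed.

Lemma comm_swap x y f c : comm x y = c%:A -> comm x (comm y f) = comm y (comm x f).
Proof.
move=> xy; apply/eqP; rewrite -subr_eq0; apply/eqP.
have -> : comm x (comm y f) - comm y (comm x f) = comm (comm x y) f.
  rewrite /comm !mulrBr !mulrBl !mulrA !opprB !addrA.
  by rewrite [LHS](ACl ((1*8*3*6)*((2*5)*(4*7)))%AC) /= !addNr !addr0.
by rewrite xy /comm mulr_algl mulr_algr subrr.
Qed.

End Commutator.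

Section Derivations.
Variables (B : algType algC) (star : B -> B) (x1 x2 x3 x4 : B).
Hypothesis Hstar : is_star star.
Hypothesis Hccr : CCR star x1 x2 x3 x4.
Local Notation partial := (Defs.deriv x1 x2 x3 x4).
Local Notation dmx := (Defs.dmx x1 x2 x3 x4).
Local Notation mxstar := (Defs.mxstar star).

Lemma partialE j f : partial j f =
  match j with
  | 1 => 'i *: comm x2 f
  | 2 => - ('i *: comm x1 f)
  | 3 => 'i *: comm x4 f
  | 4 => - ('i *: comm x3 f)
  | _ => 0
  end.
Proof. by case: j => [|[|[|[|[|j]]]]] //=; rewrite /sc mulr_algl. Qed.

Lemma partialD j a b : partial j (a + b) = partial j a + partial j b.
Proof.
by rewrite !partialE; case: j => [|[|[|[|[|j]]]]]; rewrite ?addr0 // commD scalerDr ?opprD.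
Qed.

Lemma partialM j a b : partial j (a * b) = partial j a * b + a * partial j b.
Proof.
rewrite !partialE; case: j => [|[|[|[|[|j]]]]]; rewrite ?mul0r ?mulr0 ?addr0 //;
  by rewrite commM scalerDr scalerAl scalerAr ?opprD ?mulNr ?mulrN.
Qed.

Lemma partial_nat j m : partial j m%:R = 0.
Proof. by rewrite partialE; case: j => [|[|[|[|[|j]]]]]; rewrite // comm_nat scaler0 ?oppr0. Qed.

Lemma self_adjoint_x : [/\ star x1 = x1, star x2 = x2, star x3 = x3 & star x4 = x4].
Proof. by case: Hccr. Qed.

Lemma partial_star j f : star (partial j f) = partial j (star f).
Proof.
have [s1 s2 s3 s4] := self_adjoint_x.
rewrite !partialE; case: j => [|[|[|[|[|j]]]]]; rewrite ?(star0 Hstar) //;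
  by rewrite ?(starN Hstar) (starZ Hstar) (star_comm _ Hstar) // conjCi scaleNr scalerN opprK.
Qed.

Lemma ccr_comm : [/\ comm x1 x2 = 'i%:A, comm x3 x4 = 'i%:A,
  comm x1 x3 = 0%:A, comm x1 x4 = 0%:A & comm x2 x3 = 0%:A] /\ comm x2 x4 = 0%:A.
Proof.
case: Hccr => _ [[c12 c34 c13 c14 c23] c24].
by rewrite /comm scale0r c12 c34 c13 c14 c23 c24 !subrr.
Qed.

Lemma partial_swap a b f : partial a (partial b f) = partial b (partial a f).
Proof.
have [[c12 c34 c13 c14 c23] c24] := ccr_comm.
rewrite !partialE; case: a => [|[|[|[|[|a]]]]]; case: b => [|[|[|[|[|b]]]]];
  rewrite ?(partialE, comm0, commZ, commN, scaler0, oppr0, scalerN, opprK) //.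
all: by rewrite ?(comm_swap f c12) ?(comm_swap f c34) ?(comm_swap f c13)
  ?(comm_swap f c14) ?(comm_swap f c23) ?(comm_swap f c24).
Qed.

Lemma dmxM j m l p (A : 'M[B]_(m, l)) (C : 'M[B]_(l, p)) :
  dmx j (A *m C) = dmx j A *m C + A *m dmx j C.
Proof.
apply/matrixP => a b; rewrite !mxE (big_morph _ (partialD j) (partial_nat j 0)).
by rewrite -big_split; apply: eq_bigr => r _; rewrite !mxE partialM.
Qed.

Lemma dmx1 j m : dmx j (1%:M : 'M[B]_m) = 0.
Proof. by apply/matrixP => a b; rewrite !mxE partial_nat. Qed.

Lemma dmx_mxstar j m l (A : 'M[B]_(m, l)) : dmx j (mxstar A) = mxstar (dmx j A).
Proof. by apply/matrixP => a b; rewrite !mxE partial_star. Qed.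

Lemma dmx_swap a b m l (A : 'M[B]_(m, l)) : dmx a (dmx b A) = dmx b (dmx a A).
Proof. by apply/matrixP => i j; rewrite !mxE partial_swap. Qed.

End Derivations.

Section Curvature.
Variables (B : algType algC) (star : B -> B) (x1 x2 x3 x4 : B).
Hypothesis Hstar : is_star star.
Hypothesis Hccr : CCR star x1 x2 x3 x4.
Local Notation dmx := (Defs.dmx x1 x2 x3 x4).
Local Notation mxstar := (Defs.mxstar star).
Variables (n k : nat) (U : 'M[B]_(n, k)).
Hypothesis HU : mxstar U *m U = 1%:M.

Definition Qproj : 'M[B]_n := 1%:M - U *m mxstar U.

Lemma mxstarU_Qproj : mxstar U *m Qproj = 0.
Proof. by rewrite /Qproj mulmxBr mulmx1 mulmxA HU mul1mx subrr. Qed.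

Lemma Qproj_U : Qproj *m U = 0.
Proof. by rewrite /Qproj mulmxBl mul1mx -mulmxA HU mulmx1 subrr. Qed.

Lemma mxstarU_dmxU j : mxstar U *m dmx j U = - (mxstar (dmx j U) *m U).
Proof.
have : dmx j (mxstar U *m U) = 0 by rewrite HU dmx1.
by rewrite dmxM dmx_mxstar // addrC => /eqP; rewrite addr_eq0 => /eqP.
Qed.

Definition dQd a b : 'M[B]_k := mxstar (dmx a U) *m Qproj *m dmx b U.

Lemma Fcurv_dQd a b : Fcurv star x1 x2 x3 x4 U a b = dQd a b - dQd b a.
Proof.
rewrite /Fcurv /Apot /dQd /Qproj !dmxM !dmx_mxstar // (dmx_swap Hccr b a).
rewrite !mulmxA !mxstarU_dmxU !mulmxBr !mulmxBl !mulmx1 !mulNmx !mulmxA.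
by rewrite !opprD !opprK !addrA [LHS](ACl ((2*4)*(1*5*3*6))%AC) /= subrr add0r.
Qed.
End Curvature.

Lemma mul_mx_scalar_map (R : pzRingType) m l (A : 'M[R]_(m, l)) (a : R) :
  A *m a%:M = map_mx (fun b => b * a) A.
Proof.
apply/matrixP => i j; rewrite !mxE (bigD1 j) //= mxE eqxx mulr1n big1 ?addr0 //.
by move=> r /negbTE rj; rewrite mxE rj mulr0n mulr0.
Qed.

Lemma mulmxMnl (R : pzRingType) m l p (A : 'M[R]_(m, l)) (C : 'M[R]_(l, p)) q :
  (A *+ q) *m C = (A *m C) *+ q.
Proof. exact: (raddfMn (mulmxr C)). Qed.

Lemma mulmxMnr (R : pzRingType) m l p (A : 'M[R]_(m, l)) (C : 'M[R]_(l, p)) q :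
  A *m (C *+ q) = (A *m C) *+ q.
Proof. exact: raddfMn. Qed.

Lemma sandwich_commutators (R : pzRingType) n k (W : 'M[R]_(k, n)) (V : 'M[R]_(n, k))
    (Q S P : 'M[R]_n) (S' P' : 'M[R]_k) :
  W *m Q = 0 -> Q *m V = 0 ->
  W *m (S *m Q *m P) *m V = (W *m S - S' *m W) *m Q *m (P *m V - V *m P').
Proof.
move=> WQ QV; rewrite mulmxBl -(mulmxA S') WQ mulmx0 subr0.
by rewrite mulmxBr !mulmxA -(mulmxA _ Q V) QV mulmx0 mul0mx subr0.
Qed.

Lemma sum_ord_pairs (V : zmodType) n (f : 'I_n -> 'I_n -> V) :
  \sum_(a < n) \sum_(b < n) f a b =
  \sum_(a < n) f a a + \sum_(a < n) \sum_(b < n | (a < b)%N) (f a b + f b a).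
Proof.
have row (a : 'I_n) :
    \sum_(b < n) f a b =
    f a a + \sum_(b < n | (a < b)%N) f a b + \sum_(b < n | (b < a)%N) f a b.
  rewrite (bigD1 a) //= (bigID (fun b : 'I_n => (a < b)%N)) /= addrA; congr (_ + _ + _).
  1, 2: apply: eq_bigl => b; rewrite -val_eqE /=.
  1, 2: by case: ltngtP => // ->; rewrite eqxx.
rewrite (eq_bigr _ (fun a _ => row a)) !big_split /= -addrA; congr (_ + _).
under [RHS]eq_bigr do rewrite big_split.
rewrite big_split /=; congr (_ + _).
by rewrite (exchange_big_dep xpredT).
Qed.

Lemma sum_ord4_lt (V : zmodType) (h : nat -> nat -> V) :
  \sum_(a < 4) \sum_(b < 4 | (a < b)%N) h a b =
  h 0 1 + h 0 2 + h 0 3 + h 1 2 + h 1 3 + h 2 3.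
Proof.
rewrite (eq_bigr _ (fun a _ => big_mkcond _ _)) !big_ord_recl !big_ord0 /= /bump /=.
by rewrite !addn0 !addn1 !add1n !add0r !addr0 !addrA.
Qed.

Section Kronecker.
Variable B : algType algC.

Definition kron m l (c : 'M[algC]_2) (X : 'M[B]_(m, l)) : 'M['M[B]_2]_(m, l) :=
  \matrix_(i, j) \matrix_(x, y) (c x y *: X i j).

Lemma kron_mul m l p (c c' : 'M[algC]_2) (X : 'M[B]_(m, l)) (Y : 'M[B]_(l, p)) :
  kron c X *m kron c' Y = kron (c *m c') (X *m Y).
Proof.
apply/matrixP => i j; apply/matrixP => x y.
rewrite !mxE summxE.
under eq_bigr do rewrite -mulmxE mxE.
rewrite exchange_big scaler_suml; apply: eq_bigr => z _.
rewrite scaler_sumr; apply: eq_bigr => r _.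
by rewrite !mxE -scalerAl -scalerAr scalerA.
Qed.

Lemma kronDl m l c c' (X : 'M[B]_(m, l)) : kron (c + c') X = kron c X + kron c' X.
Proof. by apply/matrixP => i j; apply/matrixP => x y; rewrite !mxE scalerDl. Qed.

Lemma kronNl m l c (X : 'M[B]_(m, l)) : kron (- c) X = - kron c X.
Proof. by apply/matrixP => i j; apply/matrixP => x y; rewrite !mxE scaleNr. Qed.

Lemma kron0l m l (X : 'M[B]_(m, l)) : kron 0 X = 0.
Proof. by apply/matrixP => i j; apply/matrixP => x y; rewrite !mxE scale0r. Qed.

Lemma kronMnl m l c (X : 'M[B]_(m, l)) p : kron (c *+ p) X = kron c X *+ p.
Proof. by elim: p => [|p IH]; rewrite ?mulr0n ?kron0l // !mulrS kronDl IH. Qed.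

Lemma kronDr m l c (X Y : 'M[B]_(m, l)) : kron c (X + Y) = kron c X + kron c Y.
Proof. by apply/matrixP => i j; apply/matrixP => x y; rewrite !mxE scalerDr. Qed.

Lemma kronNr m l c (X : 'M[B]_(m, l)) : kron c (- X) = - kron c X.
Proof. by apply/matrixP => i j; apply/matrixP => x y; rewrite !mxE scalerN. Qed.

Lemma kronBr m l c (X Y : 'M[B]_(m, l)) : kron c (X - Y) = kron c X - kron c Y.
Proof. by rewrite kronDr kronNr. Qed.

Lemma kron0r m l c : kron c (0 : 'M[B]_(m, l)) = 0.
Proof. by apply/matrixP => i j; apply/matrixP => x y; rewrite !mxE scaler0. Qed.

Lemma tens_kron m l (X : 'M[B]_(m, l)) : tens X = kron 1 X.
Proof.
apply/matrixP => i j; apply/matrixP => x y; rewrite !mxE.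
by case: (x == y); rewrite ?scale1r ?scale0r.
Qed.

Lemma scalar_kron m : (1%:M : 'M['M[B]_2]_m) = kron 1 1%:M.
Proof.
apply/matrixP => i j; apply/matrixP => x y; rewrite !mxE.
case: (i == j); rewrite ?mulr1n ?mulr0n ?mxE;
  by case: (x == y); rewrite /= ?scale1r ?scale0r ?mxE.
Qed.

End Kronecker.

Definition coef_mx (B : algType algC) (c : 'M[algC]_2) (x : B) : 'M[B]_2 :=
  map_mx (fun a => a *: x) c.

Section PauliExpansion.
Variables (B : algType algC) (star : B -> B) (x1 x2 x3 x4 : B).
Hypothesis Hstar : is_star star.
Hypothesis Hccr : CCR star x1 x2 x3 x4.
Local Notation partial := (Defs.deriv x1 x2 x3 x4).
Local Notation dmx := (Defs.dmx x1 x2 x3 x4).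
Local Notation mxstar := (Defs.mxstar star).

(* Coordinates listed in the order x2, x1, x4, x3 of the derivations they generate. *)
Definition gen (a : 'I_4) : B :=
  match val a with 0 => x2 | 1 => x1 | 2 => x4 | _ => x3 end.
Definition gam (a : 'I_4) : algC :=
  match val a with 0 => - 'i | 1 => 'i | 2 => - 'i | _ => 'i end.

Lemma comm_gen a f : comm (gen a) f = gam a *: partial a.+1 f.
Proof.
rewrite partialE /gen /gam; case: a => [[|[|[|[|a]]]] ha] //=;
  by rewrite ?scalerN ?scaleNr ?opprK scalerA mulCii ?mulrN ?scaleN1r ?opprK.
Qed.

Lemma star_gen a : star (gen a) = gen a.
Proof. by have [? ? ? ?] := self_adjoint_x Hccr; case: a => [[|[|[|[|a]]]] ha]. Qed.

Definition pmx (c : 'I_4 -> 'M[algC]_2) : 'M[B]_2 := \sum_a coef_mx (c a) (gen a).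

Lemma pmx_entry c x y : pmx c x y = \sum_a c a x y *: gen a.
Proof. by rewrite /pmx summxE; apply: eq_bigr => a _; rewrite mxE. Qed.

Lemma star2_pmx c : star2 star (pmx c) = pmx (fun a => (c a)^t*).
Proof.
apply/matrixP => x y; rewrite !mxE !pmx_entry (star_sum Hstar).
by apply: eq_bigr => a _; rewrite (starZ Hstar) star_gen !mxE.
Qed.

Lemma pmx_commutator c m l (X : 'M[B]_(m, l)) :
  (pmx c)%:M *m tens X - tens X *m (pmx c)%:M =
  \sum_a kron (gam a *: c a) (dmx a.+1 X).
Proof.
rewrite mul_scalar_mx mul_mx_scalar_map; apply/matrixP => i j.
rewrite 2!mxE !mxE summxE -!mulmxE mul_scalar_mx mul_mx_scalar_map.
apply/matrixP => x y; rewrite !mxE !summxE.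
rewrite mulr_suml mulr_sumr -sumrB; apply: eq_bigr => a _.
by rewrite !mxE -scalerAl -scalerAr -scalerBr -/(comm _ _) comm_gen scalerA mulrC.
Qed.

Lemma conj_gam a : (gam a)^* = - gam a.
Proof.
by case: a => [[|[|[|[|a]]]] ha]; rewrite /gam /= ?rmorphN /= conjCi ?opprK.
Qed.

Lemma pmx_commutator_star c m l (X : 'M[B]_(m, l)) :
  tens (mxstar X) *m (star2 star (pmx c))%:M
    - (star2 star (pmx c))%:M *m tens (mxstar X) =
  \sum_a kron ((gam a)^* *: (c a)^t*) (mxstar (dmx a.+1 X)).
Proof.
rewrite star2_pmx -opprB pmx_commutator -sumrN; apply: eq_bigr => a _.
by rewrite conj_gam scaleNr kronNl (dmx_mxstar Hstar Hccr).
Qed.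

Definition sandwich_coef (c : 'I_4 -> 'M[algC]_2) a b : 'M[algC]_2 :=
  ((gam a)^* *: (c a)^t*) *m (gam b *: c b).

Variables (n k : nat) (U : 'M[B]_(n, k)).
Hypothesis HU : mxstar U *m U = 1%:M.
Local Notation dQd := (dQd star x1 x2 x3 x4 U).

Lemma Q2_kron : Q2 star U = kron 1 (Qproj star U).
Proof. by rewrite /Q2 /U2 /U2s scalar_kron !tens_kron kron_mul mulmx1 kronBr. Qed.

Lemma pQp_dQd c : U2s star U *m pQp star U (pmx c) *m U2 U =
  \sum_a \sum_b kron (sandwich_coef c a b) (dQd a.+1 b.+1).
Proof.
have U2sQ2 : U2s star U *m Q2 star U = 0.
  by rewrite Q2_kron /U2s tens_kron kron_mul mul1mx mxstarU_Qproj // kron0r.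
have Q2U2 : Q2 star U *m U2 U = 0.
  by rewrite Q2_kron /U2 tens_kron kron_mul mul1mx Qproj_U // kron0r.
rewrite /pQp (sandwich_commutators _ _ (star2 star (pmx c))%:M (pmx c)%:M U2sQ2 Q2U2).
rewrite /U2s /U2 pmx_commutator_star pmx_commutator Q2_kron !mulmx_suml.
apply: eq_bigr => a _; rewrite mulmx_sumr; apply: eq_bigr => b _.
by rewrite !kron_mul mulmx1.
Qed.

End PauliExpansion.

Definition pauli1 : 'M[algC]_2 := \matrix_(i, j) if i == j then 0 else 1.
Definition pauli2 : 'M[algC]_2 :=
  \matrix_(i, j) if i == j then 0 else if val i == 0%N then - 'i else 'i.
Definition pauli3 : 'M[algC]_2 :=
  \matrix_(i, j) if i == j then (if val i == 0%N then 1 else -1) else 0.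

Section PauliCoefficients.
Variables (B : algType algC) (x1 x2 x3 x4 : B).
Implicit Types (x : B) (s : 'M[algC]_2).

Lemma sig1_pauli : sig1 B = map_mx (sc B) pauli1.
Proof.
by apply/matrixP => i j; rewrite !mxE; case: (i == j); rewrite /sc ?scale0r ?scale1r.
Qed.

Lemma sig2_pauli : sig2 B = map_mx (sc B) pauli2.
Proof.
apply/matrixP => i j; rewrite !mxE; case: (i == j); rewrite /sc ?scale0r //.
by case: (val i == 0%N).
Qed.

Lemma sig3_pauli : sig3 B = map_mx (sc B) pauli3.
Proof.
apply/matrixP => i j; rewrite !mxE; case: (i == j); rewrite /sc ?scale0r //.
by case: (val i == 0%N); rewrite ?scaleN1r ?scale1r.
Qed.

Lemma sx_coef_mx s x : sx (map_mx (sc B) s) x = coef_mx s x.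
Proof.
rewrite /sx mul_mx_scalar_map; apply/matrixP => i j.
by rewrite !mxE /sc mulr_algl.
Qed.

Lemma cs_coef_mx c s x : cs c (coef_mx s x) = coef_mx (c *: s) x.
Proof. by apply/matrixP => i j; rewrite !mxE /sc mulr_algl scalerA. Qed.

Lemma cs_scalar c x : cs c (x%:M : 'M[B]_2) = coef_mx (c *: 1) x.
Proof.
apply/matrixP => i j; rewrite !mxE /sc mulr_algl.
by case: (i == j); rewrite ?mulr1 ?mulr0 ?scale0r ?scaler0.
Qed.

Lemma coef_mxN s x : coef_mx (- s) x = - coef_mx s x.
Proof. by apply/matrixP => i j; rewrite !mxE scaleNr. Qed.

Lemma coef_mx0 x : coef_mx 0 x = 0.
Proof. by apply/matrixP => i j; rewrite !mxE scale0r. Qed.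

Definition p0coef (a : 'I_4) : 'M[algC]_2 :=
  match val a with
  | 0 => - ((1 / 2) *: pauli2) | 1 => (1 / 2) *: pauli1
  | 2 => ('i / 2) *: 1 | _ => - ((1 / 2) *: pauli3) end.
Definition p1coef (a : 'I_4) : 'M[algC]_2 :=
  match val a with
  | 0 => 0 | 1 => (1 / sqrtC 2) *: pauli1
  | 2 => - (('i / sqrtC 2) *: 1) | _ => 0 end.
Definition p2coef (a : 'I_4) : 'M[algC]_2 :=
  match val a with
  | 0 => sqrtC (2 / 3) *: pauli2 | 1 => (1 / sqrtC 6) *: pauli1
  | 2 => ('i / sqrtC 6) *: 1 | _ => 0 end.
Definition p3coef (a : 'I_4) : 'M[algC]_2 :=
  match val a with
  | 0 => - ((1 / (2 * sqrtC 3)) *: pauli2) | 1 => (1 / (2 * sqrtC 3)) *: pauli1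
  | 2 => ('i / (2 * sqrtC 3)) *: 1 | _ => (sqrtC 3 / 2) *: pauli3 end.

Lemma p0_pmx : p0 x1 x2 x3 x4 = pmx x1 x2 x3 x4 p0coef.
Proof.
rewrite /p0 /pmx /p0coef !big_ord_recl big_ord0 addr0 /gen /=.
rewrite sig1_pauli sig2_pauli sig3_pauli !sx_coef_mx !cs_coef_mx cs_scalar.
by rewrite !coef_mxN !addrA [RHS](ACl (2*1*4*3)%AC).
Qed.

Lemma p1_pmx : p1 x1 x4 = pmx x1 x2 x3 x4 p1coef.
Proof.
rewrite /p1 /pmx /p1coef !big_ord_recl big_ord0 addr0 /gen /=.
rewrite sig1_pauli sx_coef_mx cs_coef_mx cs_scalar.
by rewrite coef_mxN !coef_mx0 add0r addr0.
Qed.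

Lemma p2_pmx : p2 x1 x2 x4 = pmx x1 x2 x3 x4 p2coef.
Proof.
rewrite /p2 /pmx /p2coef !big_ord_recl big_ord0 addr0 /gen /=.
rewrite sig1_pauli sig2_pauli !sx_coef_mx !cs_coef_mx cs_scalar.
by rewrite coef_mx0 addr0 addrA (addrC (coef_mx _ x2)).
Qed.

Lemma p3_pmx : p3 x1 x2 x3 x4 = pmx x1 x2 x3 x4 p3coef.
Proof.
rewrite /p3 /pmx /p3coef !big_ord_recl big_ord0 addr0 /gen /=.
rewrite sig1_pauli sig2_pauli sig3_pauli !sx_coef_mx !cs_coef_mx cs_scalar.
by rewrite !coef_mxN !addrA [RHS](ACl (2*1*4*3)%AC).
Qed.

End PauliCoefficients.

Definition asd_coef a b : 'M[algC]_2 :=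
  - (sandwich_coef p0coef a b *+ 3) + sandwich_coef p1coef a b
  + sandwich_coef p2coef a b + sandwich_coef p3coef a b.

(* Indices 0, ..., 3 stand for the derivations 1, ..., 4. *)
Definition thooft_sigma (a b : nat) : 'M[algC]_2 :=
  match a, b with
  | 0, 1 | 2, 3 => 'i *: pauli3 | 1, 0 | 3, 2 => - ('i *: pauli3)
  | 0, 2 | 3, 1 => 'i *: pauli2 | 2, 0 | 1, 3 => - ('i *: pauli2)
  | 0, 3 | 1, 2 => 'i *: pauli1 | 3, 0 | 2, 1 => - ('i *: pauli1)
  | _, _ => 0
  end.

Lemma conj_sqrtC_nat m : (sqrtC m%:R : algC)^* = sqrtC m%:R.
Proof. by apply: conj_Creal; rewrite sqrtC_real // ler0n. Qed.

Lemma sqrtC6 : sqrtC 6 = sqrtC 2 * sqrtC 3 :> algC.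
Proof. by rewrite -sqrtCM ?nnegrE ?ler0n // -natrM. Qed.

Lemma sqrtC2_3 : sqrtC (2 / 3) = sqrtC 2 / sqrtC 3 :> algC.
Proof.
apply: (mulIf (_ : sqrtC 3 != 0)); first by rewrite sqrtC_eq0 pnatr_eq0.
rewrite mulfVK ?sqrtC_eq0 ?pnatr_eq0 // -sqrtCM ?nnegrE ?divr_ge0 ?ler0n //.
by rewrite mulfVK // pnatr_eq0.
Qed.

Section Adjoint.
Variable C : numClosedFieldType.
Implicit Types M : 'M[C]_2.

Lemma adjZ (a : C) M : (a *: M)^t* = a^* *: M^t*.
Proof. by apply/matrixP => i j; rewrite !mxE rmorphM. Qed.

Lemma adjN M : (- M)^t* = - M^t*.
Proof. by apply/matrixP => i j; rewrite !mxE rmorphN. Qed.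

Lemma adj0 : (0 : 'M[C]_2)^t* = 0.
Proof. by apply/matrixP => i j; rewrite !mxE rmorph0. Qed.

Lemma adj1 : (1 : 'M[C]_2)^t* = 1.
Proof. by apply/matrixP => i j; rewrite !mxE eq_sym rmorph_nat. Qed.

End Adjoint.

Lemma pauli_adj : [/\ pauli1^t* = pauli1, pauli2^t* = pauli2 & pauli3^t* = pauli3].
Proof.
split; apply/matrixP => x y; rewrite !mxE;
  case: x => [[|[|x]] hx] //; case: y => [[|[|y]] hy] //=;
  by rewrite ?rmorph0 ?rmorph1 ?rmorphN /= ?conjCi ?opprK ?rmorph1.
Qed.

Lemma asd_coef_thooft a b : asd_coef a b = thooft_sigma a b.
Proof.
have s2 : sqrtC 2 ^+ 2 = 2 :> algC by rewrite sqrtCK.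
have s3 : sqrtC 3 ^+ 2 = 3 :> algC by rewrite sqrtCK.
have s2nz : sqrtC 2 != 0 :> algC by rewrite sqrtC_eq0 pnatr_eq0.
have s3nz : sqrtC 3 != 0 :> algC by rewrite sqrtC_eq0 pnatr_eq0.
have ii := @mulCii algC.
have [h1 h2 h3] := pauli_adj.
rewrite /asd_coef /sandwich_coef /thooft_sigma.
case: a => [[|[|[|[|a]]]] ha] //; case: b => [[|[|[|[|b]]]] hb] //.
all: rewrite /p0coef /p1coef /p2coef /p3coef /gam /= ?sqrtC6 ?sqrtC2_3.
all: rewrite !(adjN, adjZ, adj0, adj1, h1, h2, h3).
all: rewrite !(rmorphM, fmorphV, rmorphN, rmorph1, rmorph0) /=.
all: rewrite ?(conjCi, conjC_nat, conj_sqrtC_nat).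
all: apply/matrixP => x y; rewrite !mxE !big_ord_recl !big_ord0 !mxE.
all: case: x => [[|[|x]] hx] //; case: y => [[|[|y]] hy] //=.
all: by field: ii s2 s3; rewrite ?s2nz ?s3nz.
Qed.

Lemma sum_kron_antisym (B : algType algC) n k (K : 'I_n -> 'I_n -> 'M[algC]_2)
    (G : 'I_n -> 'I_n -> 'M[B]_k) :
  (forall a b, K b a = - K a b) ->
  \sum_(a < n) \sum_(b < n) kron (K a b) (G a b) =
  \sum_(a < n) \sum_(b < n | (a < b)%N) kron (K a b) (G a b - G b a).
Proof.
move=> Kanti; rewrite sum_ord_pairs big1 ?add0r => [|a _].
  apply: eq_bigr => a _; apply: eq_bigr => b _.
  by rewrite (Kanti a b) kronNl kronBr.
suff -> : K a a = 0 by rewrite kron0l.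
apply/eqP; have /eqP := Kanti a a; rewrite -addr_eq0 -mulr2n -scaler_nat.
by rewrite scaler_eq0 pnatr_eq0.
Qed.

Lemma thooft_sigma_antisym a b : thooft_sigma b a = - thooft_sigma a b.
Proof.
by case: a => [|[|[|[|a]]]]; case: b => [|[|[|[|b]]]]; rewrite /= ?opprK ?oppr0.
Qed.

Lemma sum_thooft_kron (B : algType algC) k (G : nat -> nat -> 'M[B]_k) :
  \sum_(a < 4) \sum_(b < 4 | (a < b)%N) kron (thooft_sigma a b) (G a b) =
  kron ('i *: pauli3) (G 0 1 + G 2 3) + kron ('i *: pauli2) (G 0 2 - G 1 3)
  + kron ('i *: pauli1) (G 0 3 + G 1 2).
Proof.
rewrite (sum_ord4_lt (fun a b => kron (thooft_sigma a b) (G a b))) /=.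
by rewrite kronNl !kronDr kronNr !addrA [LHS](ACl (1*6*2*5*3*4)%AC).
Qed.

Lemma pauli_combination_eq0 (V : lmodType algC) (u v w : V) :
  (forall x y,
     ('i *: pauli3) x y *: u + ('i *: pauli2) x y *: v + ('i *: pauli1) x y *: w = 0) ->
  [/\ u = 0, v = 0 & w = 0].
Proof.
move=> comb.
have e00 := comb 0 0; have e01 := comb 0 1; have e10 := comb 1 0.
rewrite !mxE /= !mulr0 !mulr1 !scale0r !addr0 in e00.
rewrite !mxE /= !mulr0 !mulr1 !scale0r !add0r mulrN mulCii opprK scale1r in e01.
rewrite !mxE /= !mulr0 !mulr1 !scale0r !add0r mulCii !scaleN1r in e10.
have /eqP := e00; rewrite scaler_eq0 (negbTE (neq0Ci algC)) => /eqP u0.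
have : (v + 'i *: w) + (- v + 'i *: w) = 0 by rewrite e01 e10 addr0.
rewrite addrACA subrr add0r -mulr2n -scaler_nat => /eqP.
rewrite scaler_eq0 pnatr_eq0 scaler_eq0 (negbTE (neq0Ci algC)) /= => /eqP w0.
by split=> //; move: e01; rewrite w0 scaler0 addr0.
Qed.

Lemma kron_pauli_eq0 (B : algType algC) k (X Y Z : 'M[B]_k) :
  kron ('i *: pauli3) X + kron ('i *: pauli2) Y + kron ('i *: pauli1) Z = 0 <->
  [/\ X = 0, Y = 0 & Z = 0].
Proof.
split=> [XYZ | [-> -> ->]]; last by rewrite !kron0r !addr0.
have entry_eq0 i j : [/\ X i j = 0, Y i j = 0 & Z i j = 0].
  apply: pauli_combination_eq0 => x y.
  by have := congr1 (fun M : 'M['M[B]_2]_k => M i j x y) XYZ; rewrite !mxE.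
by split; apply/matrixP => i j; rewrite mxE; case: (entry_eq0 i j).
Qed.

Section SelfDuality.
Variables (B : algType algC) (star : B -> B) (x1 x2 x3 x4 : B).
Hypothesis Hstar : is_star star.
Hypothesis Hccr : CCR star x1 x2 x3 x4.
Variables (n k : nat) (U : 'M[B]_(n, k)).
Hypothesis HU : mxstar star U *m U = 1%:M.
Local Notation F := (Fcurv star x1 x2 x3 x4 U).
Local Notation dQd := (dQd star x1 x2 x3 x4 U).

Lemma bigExpr_asd : bigExpr star x1 x2 x3 x4 U =
  \sum_a \sum_b kron (asd_coef a b) (dQd a.+1 b.+1).
Proof.
rewrite /bigExpr p0_pmx (p1_pmx x1 x2 x3 x4) (p2_pmx x1 x2 x3 x4) p3_pmx.
rewrite !mulmxDr !mulmxDl mulmxN mulNmx mulmxMnr mulmxMnl.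
rewrite !(pQp_dQd Hstar Hccr HU) -sumrMnl -sumrN -!big_split; apply: eq_bigr => a _.
rewrite -sumrMnl -sumrN -!big_split; apply: eq_bigr => b _.
by rewrite /asd_coef !kronDl kronNl kronMnl.
Qed.

Lemma bigExpr_pauli : bigExpr star x1 x2 x3 x4 U =
  kron ('i *: pauli3) (F 1 2 + F 3 4) + kron ('i *: pauli2) (F 1 3 - F 2 4)
  + kron ('i *: pauli1) (F 1 4 + F 2 3).
Proof.
rewrite bigExpr_asd.
under eq_bigr do under eq_bigr do rewrite asd_coef_thooft.
rewrite sum_kron_antisym; last by move=> a b; exact: thooft_sigma_antisym.
have FdQd := Fcurv_dQd Hstar Hccr HU.
under eq_bigr => a _ do under eq_bigr => b _ do rewrite -FdQd.
exact: (sum_thooft_kron (fun a b => F a.+1 b.+1)).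
Qed.

End SelfDuality.

Theorem mainTheorem4 (B : algType algC) (star : B -> B) (x1 x2 x3 x4 : B)
  (Hstar : is_star star) (Hccr : CCR star x1 x2 x3 x4)
  (n k : nat) (U : 'M[B]_(n, k))
  (HU : mxstar star U *m U = 1%:M) :
  let F := Fcurv star x1 x2 x3 x4 U in
  (F 1 2 = - F 3 4 /\ F 1 3 = F 2 4 /\ F 1 4 = - F 2 3) <->
  bigExpr star x1 x2 x3 x4 U = 0.
Proof.
move=> F; rewrite (bigExpr_pauli Hstar Hccr HU) kron_pauli_eq0 -/F.
split=> [[-> [-> ->]] | [/eqP F1234 /eqP F1324 /eqP F1423]].
  by rewrite !addNr subrr.
move: F1234 F1324 F1423; rewrite !addr_eq0 opprK.
by do 3 move/eqP->.
Qed.
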